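(* Let $0<c<1$ and $\alpha \in \mathbb{C}$. Then there exists a constant $B(c)$ (also allowed to depend on $\alpha$) such that for all $0<u<c$, \[ \left|(-\log{(1-e^{-u})})^{\alpha}-(-\log{u})^{\alpha}\right| \leq B(c)\, u^{1/2}(-\log{u})^{\operatorname{Re}(\alpha)-1/2}. \]
   Context: Powers of positive reals are defined by $x^{\alpha}=e^{\alpha\log x}$. *)

From Stdlib Require Import Reals.
From Coquelicot Require Import Coquelicot.
Open Scope R_scope.

Definition cpow (x : R) (a : C) : C :=
  (exp (Re a * ln x) * cos (Im a * ln x), exp (Re a * ln x) * sin (Im a * ln x)).

(** With [L = -ln u] and [M = -ln (1 - e^-u)] we have [L <= M <= L + u], hence
    [0 <= ln M - ln L <= u / L <= 1 / (-ln c)].  Writing [x^a = e^(Re a ln x) e^(i Im a ln x)],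
    the difference [M^a - L^a] is at most a constant times [L^(Re a) (ln M - ln L)],
    and [u / L <= (-ln c)^(-1/2) u^(1/2) L^(-1/2)] because [u <= 1] and [L >= -ln c]. *)
From Stdlib Require Import Reals Lra.
From Coquelicot Require Import Coquelicot.
Open Scope R_scope.

Lemma Cmod_le_Rabs_add (x y : R) : Cmod (x, y) <= Rabs x + Rabs y.
Proof.
  pose proof (Rabs_pos x); pose proof (Rabs_pos y).
  unfold Cmod; cbn [fst snd].
  rewrite <- (sqrt_pow2 (Rabs x + Rabs y)) by lra.
  apply sqrt_le_1_alt.
  rewrite <- (pow2_abs x), <- (pow2_abs y).
  nra.
Qed.

Lemma Rabs_mul_sub_mul_le (p E z w : R) :
  Rabs z <= 1 -> 0 <= E -> Rabs (p * z - E * w) <= Rabs (p - E) + E * Rabs (z - w).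
Proof.
  intros Hz HE.
  replace (p * z - E * w) with ((p - E) * z + E * (z - w)) by ring.
  eapply Rle_trans; [apply Rabs_triang|].
  rewrite !Rabs_mult, (Rabs_right E) by lra.
  pose proof (Rabs_pos (p - E)).
  nra.
Qed.

Lemma cos_scaled_lipschitz (t a b : R) :
  Rabs (cos (t * a) - cos (t * b)) <= Rabs t * Rabs (a - b).
Proof.
  destruct (MVT_abs cos (fun x => - sin x) (t * b) (t * a)) as [y [-> _]].
  { intros; apply derivable_pt_lim_cos. }
  rewrite Rabs_Ropp, <- Rmult_minus_distr_l, !Rabs_mult.
  rewrite <- (Rmult_1_l (Rabs t * Rabs (a - b))) at 2.
  apply Rmult_le_compat_r; [apply Rmult_le_pos; apply Rabs_pos|].
  apply Rabs_le, SIN_bound.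
Qed.

Lemma sin_scaled_lipschitz (t a b : R) :
  Rabs (sin (t * a) - sin (t * b)) <= Rabs t * Rabs (a - b).
Proof.
  destruct (MVT_abs sin cos (t * b) (t * a)) as [y [-> _]].
  { intros; apply derivable_pt_lim_sin. }
  rewrite <- Rmult_minus_distr_l, !Rabs_mult.
  rewrite <- (Rmult_1_l (Rabs t * Rabs (a - b))) at 2.
  apply Rmult_le_compat_r; [apply Rmult_le_pos; apply Rabs_pos|].
  apply Rabs_le, COS_bound.
Qed.

Lemma exp_le_compat (x y : R) : x <= y -> exp x <= exp y.
Proof. intros [Hlt | ->]; [left; apply exp_increasing | right]; easy. Qed.

Lemma Rabs_exp_sub_1_le (h : R) : Rabs (exp h - 1) <= Rabs h * exp (Rabs h).
Proof.
  pose proof (exp_ineq1_le h); pose proof (exp_ineq1_le (- h)).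
  assert (Hinv : exp h * exp (- h) = 1) by (rewrite <- exp_plus, Rplus_opp_r; apply exp_0).
  destruct (Rle_dec 0 h).
  - rewrite (Rabs_right h), Rabs_right by lra.
    pose proof (exp_pos h); nra.
  - assert (exp h < 1) by (rewrite <- exp_0; apply exp_increasing; lra).
    rewrite (Rabs_left h), Rabs_left by lra.
    nra.
Qed.

Lemma Rabs_exp_mul_sub_le (r a b : R) :
  Rabs (exp (r * a) - exp (r * b))
    <= exp (r * b) * (Rabs r * Rabs (a - b) * exp (Rabs r * Rabs (a - b))).
Proof.
  replace (exp (r * a) - exp (r * b)) with (exp (r * b) * (exp (r * (a - b)) - 1))
    by (rewrite Rmult_minus_distr_l, <- exp_plus; f_equal; f_equal; ring).
  rewrite Rabs_mult, (Rabs_right (exp _)) by (left; apply exp_pos).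
  apply Rmult_le_compat_l; [left; apply exp_pos|].
  rewrite <- Rabs_mult; apply Rabs_exp_sub_1_le.
Qed.

Lemma Cmod_cpow_sub_le (x y : R) (a : C) :
  Cmod (Cminus (cpow x a) (cpow y a)) <=
  2 * Rpower y (Re a) * Rabs (ln x - ln y) *
    (Rabs (Re a) * exp (Rabs (Re a) * Rabs (ln x - ln y)) + Rabs (Im a)).
Proof.
  destruct a as [r t]; unfold cpow, Rpower, Re, Im; cbn [fst snd].
  set (E := exp (r * ln y)); set (d := Rabs (ln x - ln y)).
  replace (Cminus _ _) with
    (exp (r * ln x) * cos (t * ln x) - E * cos (t * ln y),
     exp (r * ln x) * sin (t * ln x) - E * sin (t * ln y))
    by (unfold Cminus, Cplus, Copp; cbn [fst snd]; f_equal; ring).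
  assert (HE : 0 <= E) by (left; apply exp_pos).
  pose proof (Rabs_exp_mul_sub_le r (ln x) (ln y)) as Hexp.
  pose proof (Rabs_mul_sub_mul_le (exp (r * ln x)) E (cos (t * ln x)) (cos (t * ln y))
    ltac:(apply Rabs_le, COS_bound) HE) as Hre.
  pose proof (Rabs_mul_sub_mul_le (exp (r * ln x)) E (sin (t * ln x)) (sin (t * ln y))
    ltac:(apply Rabs_le, SIN_bound) HE) as Him.
  pose proof (Rmult_le_compat_l E _ _ HE (cos_scaled_lipschitz t (ln x) (ln y))) as Hcos.
  pose proof (Rmult_le_compat_l E _ _ HE (sin_scaled_lipschitz t (ln x) (ln y))) as Hsin.
  fold E d in Hexp, Hre, Him, Hcos, Hsin |- *.
  eapply Rle_trans; [apply Cmod_le_Rabs_add|].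
  lra.
Qed.

Lemma ln_sub_ln_bounds (x y : R) : 0 < y -> y <= x -> 0 <= ln x - ln y <= (x - y) / y.
Proof.
  intros Hy Hyx; split.
  - pose proof (ln_le y x Hy Hyx); lra.
  - rewrite <- ln_div by lra.
    pose proof (exp_ineq1_le (ln (x / y))) as H.
    rewrite exp_ln in H by (apply Rdiv_lt_0_compat; lra).
    replace ((x - y) / y) with (x / y - 1) by (field; lra).
    lra.
Qed.

Lemma one_sub_exp_neg_bounds (u : R) : 0 <= u -> u * exp (- u) <= 1 - exp (- u) <= u.
Proof.
  intros Hu; pose proof (exp_ineq1_le (- u)); pose proof (exp_ineq1_le u).
  assert (Hinv : exp u * exp (- u) = 1) by (rewrite <- exp_plus, Rplus_opp_r; apply exp_0).
  pose proof (exp_pos (- u)).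
  split; nra.
Qed.

Lemma neg_ln_one_sub_exp_neg_bounds (u : R) :
  0 < u -> - ln u <= - ln (1 - exp (- u)) <= - ln u + u.
Proof.
  intros Hu; destruct (one_sub_exp_neg_bounds u ltac:(lra)) as [Hlo Hhi].
  assert (Hpos : 0 < u * exp (- u)) by (pose proof (exp_pos (- u)); nra).
  pose proof (ln_le _ _ (Rlt_le_trans _ _ _ Hpos Hlo) Hhi).
  pose proof (ln_le _ _ Hpos Hlo) as Hln.
  rewrite ln_mult, ln_exp in Hln by (try apply exp_pos; lra).
  lra.
Qed.

Lemma ln_neg_ln_one_sub_exp_neg_sub_bounds (u : R) :
  0 < u < 1 -> 0 <= ln (- ln (1 - exp (- u))) - ln (- ln u) <= u / (- ln u).
Proof.
  intros [Hu0 Hu1].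
  assert (HL : 0 < - ln u) by (pose proof (ln_increasing u 1 Hu0 Hu1); rewrite ln_1 in *; lra).
  destruct (neg_ln_one_sub_exp_neg_bounds u Hu0) as [HLM HML].
  destruct (ln_sub_ln_bounds _ _ HL HLM) as [Hd0 Hd1].
  split; [exact Hd0|].
  eapply Rle_trans; [exact Hd1|].
  apply Rmult_le_compat_r; [left; apply Rinv_0_lt_compat|]; lra.
Qed.

Lemma Rpower_1_l (y : R) : Rpower 1 y = 1.
Proof. unfold Rpower; rewrite ln_1, Rmult_0_r; apply exp_0. Qed.

Lemma Rpower_half_mul_self (x : R) : 0 < x -> Rpower x (1 / 2) * Rpower x (1 / 2) = x.
Proof.
  intros Hx; rewrite <- Rpower_plus.
  replace (1 / 2 + 1 / 2) with 1 by field.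
  now apply Rpower_1.
Qed.

Lemma div_le_Rpower_half (u L0 L : R) :
  0 < u <= 1 -> 0 < L0 <= L ->
  u / L <= Rpower L0 (- (1 / 2)) * (Rpower u (1 / 2) * Rpower L (- (1 / 2))).
Proof.
  intros Hu HL.
  assert (HuL : 0 < L) by lra.
  assert (Hsu : Rpower u (1 / 2) <= 1)
    by (rewrite <- (Rpower_1_l (1 / 2)) at 2; apply Rle_Rpower_l; lra).
  assert (HsL : Rpower L (- (1 / 2)) <= Rpower L0 (- (1 / 2))).
  { rewrite !Rpower_Ropp; apply Rinv_le_contravar.
    - apply exp_pos.
    - apply Rle_Rpower_l; lra. }
  assert (Hinv : / L = Rpower L (- (1 / 2)) * Rpower L (- (1 / 2)))
    by (rewrite Rpower_Ropp, <- Rinv_mult, Rpower_half_mul_self; auto).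
  change (u * / L <= Rpower L0 (- (1 / 2)) * (Rpower u (1 / 2) * Rpower L (- (1 / 2))));
  rewrite Hinv, <- (Rpower_half_mul_self u) at 1 by lra.
  assert (Ha : 0 < Rpower u (1 / 2)) by apply exp_pos.
  assert (Hb : 0 < Rpower L (- (1 / 2))) by apply exp_pos.
  set (a := Rpower u (1 / 2)) in *; set (b := Rpower L (- (1 / 2))) in *.
  replace (a * a * (b * b)) with ((a * b) * (a * b)) by ring.
  apply Rmult_le_compat_r; [nra|].
  apply Rle_trans with (1 * b); [apply Rmult_le_compat_r|]; lra.
Qed.

Theorem proposition1 (c : R) (alpha : C) :
  0 < c < 1 ->
  exists B : R, forall u : R, 0 < u < c ->
    Cmod (Cminus (cpow (- ln (1 - exp (- u))) alpha) (cpow (- ln u) alpha))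
      <= B * (Rpower u (1 / 2) * Rpower (- ln u) (Re alpha - 1 / 2)).
Proof.
  intros [Hc0 Hc1].
  set (L0 := - ln c); set (r := Re alpha); set (t := Im alpha).
  assert (HL0 : 0 < L0) by (pose proof (ln_increasing c 1 Hc0 Hc1); rewrite ln_1 in *; unfold L0; lra).
  set (C1 := Rabs r * exp (Rabs r * / L0) + Rabs t).
  exists (2 * C1 * Rpower L0 (- (1 / 2))).
  intros u [Hu0 Huc].
  set (L := - ln u); set (M := - ln (1 - exp (- u))).
  assert (HLL0 : L0 <= L) by (pose proof (ln_le u c Hu0 ltac:(lra)); unfold L, L0; lra).
  destruct (ln_neg_ln_one_sub_exp_neg_sub_bounds u ltac:(lra)) as [Hd0 Hd1]; fold L M in Hd0, Hd1.
  assert (Hd2 : u / L <= / L0).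
  { unfold Rdiv; rewrite <- (Rmult_1_l (/ L0)).
    apply Rmult_le_compat; [lra | left; apply Rinv_0_lt_compat | | apply Rinv_le_contravar]; lra. }
  pose proof (Cmod_cpow_sub_le M L alpha) as Hkey; fold r t in Hkey.
  rewrite Rabs_right in Hkey by lra.
  assert (Hexp : exp (Rabs r * (ln M - ln L)) <= exp (Rabs r * / L0)).
  { apply exp_le_compat, Rmult_le_compat_l; [apply Rabs_pos | lra]. }
  pose proof (div_le_Rpower_half u L0 L ltac:(lra) ltac:(lra)) as Hsqrt.
  unfold Rminus; rewrite Rpower_plus; fold r L.
  eapply Rle_trans; [exact Hkey|].
  replace (2 * C1 * Rpower L0 (- (1 / 2)) * (Rpower u (1 / 2) * (Rpower L r * Rpower L (- (1 / 2)))))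
    with (2 * Rpower L r * (Rpower L0 (- (1 / 2)) * (Rpower u (1 / 2) * Rpower L (- (1 / 2)))) * C1)
    by ring.
  assert (HPL : 0 < Rpower L r) by apply exp_pos.
  pose proof (exp_pos (Rabs r * (ln M - ln L))); pose proof (Rabs_pos r); pose proof (Rabs_pos t).
  apply Rmult_le_compat.
  - nra.
  - nra.
  - apply Rmult_le_compat_l; lra.
  - unfold C1; nra.
Qed.
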